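(* For every real number $\varepsilon>0$ there exists a set $S\subseteq\mathbb{Z}^{2}$ of lattice points in general position (no three points of $S$ lie on a common line) such that $$\left|S\cap[1,n]^{2}\right|=\Theta\!\left(\frac{n}{\log^{1+\varepsilon}n}\right).$$ In particular, $$\liminf_{n\to\infty}\frac{\left|S\cap[1,n]^{2}\right|}{n/\log^{1+\varepsilon}n}>0.$$
   Context: $[1,n]^2$ denotes the set of lattice points $(x,y)\in\mathbb{Z}^2$ with $1\le x,y\le n$. *)

From Stdlib Require Import Reals ZArith List.
Import ListNotations.
Open Scope R_scope.

(* A subset S of Z^2 is represented by its (classical) characteristic
   function S : Z -> Z -> bool. *)

(* p, q, r are collinear iff the cross product (q - p) x (r - p) is 0. *)
Definition collinear (p q r : Z * Z) : Prop :=
  ((fst q - fst p) * (snd r - snd p) - (snd q - snd p) * (fst r - fst p))%Z = 0%Z.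

Definition general_position (S : Z -> Z -> bool) : Prop :=
  forall p q r : Z * Z,
    S (fst p) (snd p) = true -> S (fst q) (snd q) = true -> S (fst r) (snd r) = true ->
    p <> q -> q <> r -> p <> r -> ~ collinear p q r.

Definition grid (n : nat) : list (Z * Z) :=
  list_prod (map Z.of_nat (seq 1 n)) (map Z.of_nat (seq 1 n)).

Definition count_in_box (S : Z -> Z -> bool) (n : nat) : nat :=
  length (filter (fun p => S (fst p) (snd p)) (grid n)).

(* Points are placed greedily in the dyadic cells [2^j, 2^(j+1)) x [1, 2^j]:
   about kappa 2^j / j^a of them in cell j (a = 1 + eps), each off every line
   through two earlier points.  A line through two lattice points whose
   direction has primitive vector p meets a cell of side X in at most
   6X / |p|_oo points, so at most 6X times the "pair weight" (the sum of
   1/|p|_oo over earlier pairs) points are forbidden.  A divisor-sum estimate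
   bounds the average, over the cell, of the weight a new point adds by
   O(j^2 M / 2^j), where M = O(2^j / j^a) points have been placed so far.
   Taking a free point of at most twice the average weight keeps the pair
   weight O(2^j) because a >= 1, so half of every cell stays free.  The count
   in [1,n]^2 then lies between the quota of one cell and the total quota of
   all cells below n, both of order n / log^a n. *)

From Stdlib Require Import Reals ZArith List Lia Lra Psatz ClassicalEpsilon.
Import ListNotations.
Open Scope R_scope.
Open Scope bool_scope.

(** * Sums over lists *)

Fixpoint sumR {A} (f : A -> R) (l : list A) : R :=
  match l with [] => 0 | x :: l' => f x + sumR f l' end.

Lemma sumR_app {A} (f : A -> R) l1 l2 : sumR f (l1 ++ l2) = sumR f l1 + sumR f l2.
Proof. induction l1; simpl; lra. Qed.

Lemma sumR_ext {A} (f : A -> R) g l : (forall x, In x l -> f x = g x) -> sumR f l = sumR g l.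
Proof. induction l; simpl; intros H; [reflexivity|]. rewrite H, IHl; auto. Qed.

Lemma sumR_le {A} (f : A -> R) g l : (forall x, In x l -> f x <= g x) -> sumR f l <= sumR g l.
Proof.
  induction l; simpl; intros H; [lra|].
  assert (f a <= g a) by auto. assert (sumR f l <= sumR g l) by auto. lra.
Qed.

Lemma sumR_nonneg {A} (f : A -> R) l : (forall x, In x l -> 0 <= f x) -> 0 <= sumR f l.
Proof.
  induction l; simpl; intros H; [lra|].
  assert (0 <= f a) by auto. assert (0 <= sumR f l) by auto. lra.
Qed.

Lemma sumR_const {A} (l : list A) c : sumR (fun _ => c) l = INR (length l) * c.
Proof. induction l; cbn [sumR length]; [simpl; lra|]. rewrite S_INR, IHl. ring. Qed.

Lemma sumR_le_const {A} (f : A -> R) l c : (forall x, In x l -> f x <= c) -> sumR f l <= INR (length l) * c.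
Proof. intros H. rewrite <- sumR_const. now apply sumR_le. Qed.

Lemma sumR_plus {A} (f : A -> R) g l : sumR (fun x => f x + g x) l = sumR f l + sumR g l.
Proof. induction l; simpl; lra. Qed.

Lemma sumR_scal {A} (f : A -> R) l c : sumR (fun x => c * f x) l = c * sumR f l.
Proof. induction l; simpl; [lra|]. rewrite IHl. lra. Qed.

Lemma sumR_map {A B} (h : B -> R) (m : A -> B) l : sumR h (map m l) = sumR (fun x => h (m x)) l.
Proof. induction l; simpl; congruence. Qed.

Lemma sumR_filter_le {A} (f : A -> R) (P : A -> bool) l :
  (forall x, In x l -> 0 <= f x) -> sumR f (filter P l) <= sumR f l.
Proof.
  induction l; simpl; intros H; [lra|].
  assert (sumR f (filter P l) <= sumR f l) by auto. assert (0 <= f a) by auto.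
  destruct (P a); simpl; lra.
Qed.

Lemma sumR_elem_le {A} (f : A -> R) l x : In x l -> (forall y, In y l -> 0 <= f y) -> f x <= sumR f l.
Proof.
  induction l; simpl; intros Hx H; [contradiction|].
  assert (0 <= f a) by auto.
  destruct Hx as [<-|Hx].
  - assert (0 <= sumR f l) by (apply sumR_nonneg; auto). lra.
  - assert (f x <= sumR f l) by auto. lra.
Qed.

Lemma sumR_incl {A} (f : A -> R) l l' :
  NoDup l -> incl l l' -> (forall x, In x l' -> 0 <= f x) -> sumR f l <= sumR f l'.
Proof.
  revert l'. induction l as [|a l IH]; intros l' Hn Hi Hf; simpl.
  - now apply sumR_nonneg.
  - inversion Hn as [|? ? Hal Hl]; subst.
    destruct (in_split a l') as [L1 [L2 ->]]; [apply Hi; now left|].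
    assert (sumR f l <= sumR f (L1 ++ L2)).
    { apply IH; auto.
      - intros x Hx. assert (Hx' : In x (L1 ++ a :: L2)) by (apply Hi; now right).
        apply in_app_or in Hx'. apply in_or_app. destruct Hx' as [H|[<-|H]]; tauto.
      - intros x Hx. apply Hf, in_or_app. apply in_app_or in Hx. simpl. tauto. }
    rewrite sumR_app in *. simpl. lra.
Qed.

Lemma sumR_le_reindex {A B} (f : A -> R) (P : A -> bool) (m : A -> B) (h : B -> R) l (l' : list B) :
  NoDup l ->
  (forall x, In x l -> P x = false -> f x <= 0) ->
  (forall x, In x l -> P x = true -> In (m x) l' /\ f x <= h (m x)) ->
  (forall x y, In x l -> In y l -> P x = true -> P y = true -> m x = m y -> x = y) ->
  (forall y, In y l' -> 0 <= h y) ->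
  sumR f l <= sumR h l'.
Proof.
  intros Hn Hoff Hon Hinj Hh.
  apply Rle_trans with (sumR f (filter P l)).
  { clear Hn Hon Hinj. induction l as [|a l IH]; simpl; [lra|].
    assert (IH' : sumR f l <= sumR f (filter P l)) by (apply IH; intros; apply Hoff; simpl; auto).
    destruct (P a) eqn:E; simpl; [lra|]. assert (f a <= 0) by (apply Hoff; simpl; auto). lra. }
  apply Rle_trans with (sumR (fun x => h (m x)) (filter P l)).
  { apply sumR_le. intros x Hx. apply filter_In in Hx. apply Hon; tauto. }
  rewrite <- sumR_map. apply sumR_incl; auto.
  - apply NoDup_map_NoDup_ForallPairs; [|now apply NoDup_filter].
    intros x y Hx Hy E. apply filter_In in Hx, Hy. apply Hinj; tauto.
  - intros y Hy. apply in_map_iff in Hy. destruct Hy as [x [<- Hx]].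
    apply filter_In in Hx. apply Hon; tauto.
Qed.

Lemma sumR_exists_le_average {A} (f : A -> R) l :
  l <> [] -> exists x, In x l /\ INR (length l) * f x <= sumR f l.
Proof.
  induction l as [|a l IH]; intros Hne; [congruence|].
  destruct l as [|b l].
  - exists a. simpl. split; [now left|lra].
  - destruct (IH ltac:(discriminate)) as [x [Hx Hfx]].
    set (n := length (b :: l)) in *. cbn [length sumR] in *. fold n.
    pose proof (pos_INR n). rewrite S_INR.
    destruct (Rle_dec (f a) (f x)).
    + exists a. split; [now left|]. nra.
    + exists x. split; [now right|]. nra.
Qed.

Lemma length_filter_orb {A} (P Q : A -> bool) l :
  (length (filter (fun x => P x || Q x) l) <= length (filter P l) + length (filter Q l))%nat.
Proof. induction l; simpl; auto. destruct (P a), (Q a); simpl; lia. Qed.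

Lemma length_filter_existsb {A B} (h : B -> A -> bool) (L : list B) l :
  INR (length (filter (fun w => existsb (fun b => h b w) L) l))
  <= sumR (fun b => INR (length (filter (h b) l))) L.
Proof.
  induction L as [|b L IH]; simpl.
  - replace (filter (fun _ => false) l) with (@nil A) by (induction l; auto).
    simpl; lra.
  - eapply Rle_trans; [apply le_INR, (length_filter_orb (h b))|].
    rewrite plus_INR. lra.
Qed.

Lemma length_filter_negb {A} (P : A -> bool) l :
  length l = (length (filter P l) + length (filter (fun x => negb (P x)) l))%nat.
Proof. induction l; simpl; auto. destruct (P a); simpl; lia. Qed.

Lemma NoDup_list_prod {A B} (l : list A) (l' : list B) : NoDup l -> NoDup l' -> NoDup (list_prod l l').
Proof.
  induction l; simpl; intros H1 H2; [constructor|].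
  inversion H1; subst. apply NoDup_app; auto.
  - apply NoDup_map_NoDup_ForallPairs; auto. intros x y _ _ E. congruence.
  - intros [x y] Hx Hy. apply in_map_iff in Hx. destruct Hx as [z [E _]].
    inversion E; subst. apply in_prod_iff in Hy. tauto.
Qed.

Lemma sumR_swap {A B} (h : A -> B -> R) (l : list A) (l' : list B) :
  sumR (fun x => sumR (h x) l') l = sumR (fun y => sumR (fun x => h x y) l) l'.
Proof.
  induction l; simpl.
  - induction l'; simpl; lra.
  - rewrite IHl, <- sumR_plus. reflexivity.
Qed.

Lemma sumR_list_prod {A B} (h : A * B -> R) (l : list A) (l' : list B) :
  sumR h (list_prod l l') = sumR (fun x => sumR (fun y => h (x, y)) l') l.
Proof. induction l; simpl; auto. rewrite sumR_app, sumR_map, IHl. reflexivity. Qed.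

Fixpoint zrange (lo : Z) (n : nat) : list Z :=
  match n with O => [] | S n' => lo :: zrange (lo + 1) n' end.

Lemma in_zrange lo n x : In x (zrange lo n) <-> (lo <= x < lo + Z.of_nat n)%Z.
Proof.
  revert lo. induction n; intros lo; simpl; [lia|].
  rewrite IHn. lia.
Qed.

Lemma zrange_NoDup lo n : NoDup (zrange lo n).
Proof.
  revert lo. induction n; intros lo; simpl; constructor; auto.
  rewrite in_zrange. lia.
Qed.

Lemma length_zrange lo n : length (zrange lo n) = n.
Proof. revert lo. induction n; intros lo; simpl; auto. Qed.

Lemma zrange_add lo n m : zrange lo (n + m) = zrange lo n ++ zrange (lo + Z.of_nat n) m.
Proof.
  revert lo. induction n; intros lo; simpl.
  - now rewrite Z.add_0_r.
  - rewrite IHn. do 3 f_equal. lia.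
Qed.

(** * Collinearity and general position *)

Definition Zpair_dec (p q : Z * Z) : {p = q} + {p <> q}.
Proof. decide equality; apply Z.eq_dec. Defined.

Definition cross (p q r : Z * Z) : Z :=
  ((fst q - fst p) * (snd r - snd p) - (snd q - snd p) * (fst r - fst p))%Z.

Lemma collinear_cross p q r : collinear p q r <-> cross p q r = 0%Z.
Proof. reflexivity. Qed.

Lemma cross_swap12 p q r : cross q p r = (- cross p q r)%Z.
Proof. unfold cross; ring. Qed.

Lemma cross_swap23 p q r : cross p r q = (- cross p q r)%Z.
Proof. unfold cross; ring. Qed.

Definition collinearb (p q r : Z * Z) : bool := Z.eqb (cross p q r) 0.

Fixpoint on_secant (P : list (Z * Z)) (w : Z * Z) : bool :=
  match P with
  | [] => false
  | z :: P' => on_secant P' w || existsb (fun a => collinearb z a w) P'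
  end.

Lemma on_secant_false P w : on_secant P w = false ->
  forall q r, In q P -> In r P -> q <> r -> ~ collinear q r w.
Proof.
  induction P as [|z P IH]; simpl; intros H q r Hq Hr Hqr; [contradiction|].
  rewrite collinear_cross.
  apply Bool.orb_false_elim in H. destruct H as [HP Hz].
  assert (Hz' : forall a, In a P -> cross z a w <> 0%Z).
  { intros a Ha E. assert (existsb (fun a => collinearb z a w) P = true) by
      (apply existsb_exists; exists a; unfold collinearb; rewrite E; auto).
    congruence. }
  destruct Hq as [<-|Hq]; destruct Hr as [<-|Hr].
  - congruence.
  - now apply Hz'.
  - rewrite cross_swap12. intro E. apply (Hz' q Hq). lia.
  - now apply IH.
Qed.

Definition gp_list (P : list (Z * Z)) : Prop :=
  NoDup P /\
  forall p q r, In p P -> In q P -> In r P -> p <> q -> q <> r -> p <> r -> ~ collinear p q r.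

Lemma gp_list_nil : gp_list [].
Proof. split; [constructor|]. intros p; contradiction. Qed.

Lemma gp_list_cons z P : gp_list P -> ~ In z P -> on_secant P z = false -> gp_list (z :: P).
Proof.
  intros [HN HP] Hz Hs. split; [now constructor|].
  pose proof (on_secant_false P z Hs) as B.
  intros p q r [->|Hp] [->|Hq] [->|Hr] Hpq Hqr Hpr; try congruence;
    rewrite collinear_cross in *.
  - replace (cross p q r) with (cross q r p) by (unfold cross; ring). now apply B.
  - rewrite cross_swap23. intro E. apply (B p r); auto. apply collinear_cross. lia.
  - now apply B.
  - now apply HP.
Qed.

(** * Lattice points on secants *)

Definition vsub (p q : Z * Z) : Z * Z := (fst p - fst q, snd p - snd q)%Z.

Definition sup_norm (u : Z * Z) : Z := Z.max (Z.abs (fst u)) (Z.abs (snd u)).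

Definition primitive (u : Z * Z) : Z * Z :=
  (fst u / Z.gcd (fst u) (snd u), snd u / Z.gcd (fst u) (snd u))%Z.

(* For u <> 0 this is 1 / sup_norm (primitive u) (dir_weight_primitive);
   for u = 0 it is 0/0 = 0. *)
Definition dir_weight (u : Z * Z) : R := IZR (Z.gcd (fst u) (snd u)) / IZR (sup_norm u).

Lemma dir_weight_vsub_comm p q : dir_weight (vsub p q) = dir_weight (vsub q p).
Proof.
  unfold dir_weight, sup_norm, vsub; simpl.
  replace (fst q - fst p)%Z with (- (fst p - fst q))%Z by ring.
  replace (snd q - snd p)%Z with (- (snd p - snd q))%Z by ring.
  now rewrite Z.gcd_opp_l, Z.gcd_opp_r, !Z.abs_opp.
Qed.

Lemma gcd_le_abs a b : (a <> 0)%Z -> (Z.gcd a b <= Z.abs a)%Z.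
Proof.
  intros H. apply Z.divide_pos_le; [lia|].
  apply Z.divide_abs_r, Z.gcd_divide_l.
Qed.

Lemma gcd_pos u : u <> (0, 0)%Z -> (0 < Z.gcd (fst u) (snd u))%Z.
Proof.
  intros Hu. pose proof (Z.gcd_nonneg (fst u) (snd u)).
  enough (Z.gcd (fst u) (snd u) <> 0)%Z by lia.
  intros E. apply Z.gcd_eq_0 in E. apply Hu. destruct u; simpl in *. f_equal; lia.
Qed.

Lemma gcd_mul_div a b : (Z.gcd a b * (a / Z.gcd a b))%Z = a.
Proof.
  destruct (Z.eq_dec (Z.gcd a b) 0) as [E|E].
  - apply Z.gcd_eq_0 in E. destruct E as [-> ->]. reflexivity.
  - symmetry. apply Z.div_exact; [exact E|]. apply Z.mod_divide; [exact E|].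
    apply Z.gcd_divide_l.
Qed.

Lemma gcd_mul_primitive u :
  (Z.gcd (fst u) (snd u) * fst (primitive u) = fst u /\
   Z.gcd (fst u) (snd u) * snd (primitive u) = snd u)%Z.
Proof. unfold primitive; simpl. split; [apply gcd_mul_div|rewrite Z.gcd_comm; apply gcd_mul_div]. Qed.

Lemma sup_norm_primitive u : sup_norm u = (Z.gcd (fst u) (snd u) * sup_norm (primitive u))%Z.
Proof.
  destruct (gcd_mul_primitive u) as [E1 E2].
  pose proof (Z.gcd_nonneg (fst u) (snd u)).
  set (g := Z.gcd (fst u) (snd u)) in *. set (p := primitive u) in *.
  unfold sup_norm. rewrite <- E1, <- E2 at 1. rewrite !Z.abs_mul, (Z.abs_eq g) by lia.
  apply Z.mul_max_distr_nonneg_l. lia.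
Qed.

Lemma sup_norm_primitive_pos u : u <> (0, 0)%Z -> (1 <= sup_norm (primitive u))%Z.
Proof.
  intros Hu. pose proof (sup_norm_primitive u). pose proof (gcd_pos u Hu).
  assert (0 < sup_norm u)%Z.
  { unfold sup_norm. destruct u as [u1 u2]. simpl.
    destruct (Z.eq_dec u1 0), (Z.eq_dec u2 0); [subst; congruence|lia|lia|lia]. }
  nia.
Qed.

Lemma dir_weight_primitive u : u <> (0, 0)%Z -> dir_weight u = / IZR (sup_norm (primitive u)).
Proof.
  intros Hu. unfold dir_weight. rewrite sup_norm_primitive, mult_IZR.
  assert (0 < IZR (Z.gcd (fst u) (snd u))) by (apply IZR_lt, gcd_pos, Hu).
  assert (0 < IZR (sup_norm (primitive u))) by (apply IZR_lt; pose proof (sup_norm_primitive_pos u Hu); lia).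
  field. lra.
Qed.

Lemma dir_weight_nonneg u : 0 <= dir_weight u.
Proof.
  destruct (Zpair_dec u (0, 0)%Z) as [->|Hu].
  - unfold dir_weight. simpl. unfold Rdiv. rewrite Rmult_0_l. lra.
  - rewrite dir_weight_primitive by exact Hu. left. apply Rinv_0_lt_compat, IZR_lt.
    pose proof (sup_norm_primitive_pos u Hu). lia.
Qed.

Lemma dir_weight_le_1 u : dir_weight u <= 1.
Proof.
  destruct (Zpair_dec u (0, 0)%Z) as [->|Hu].
  - unfold dir_weight. simpl. unfold Rdiv. rewrite Rmult_0_l. lra.
  - rewrite dir_weight_primitive by exact Hu. rewrite <- Rinv_1.
    apply Rinv_le_contravar; [lra|]. apply IZR_le, sup_norm_primitive_pos, Hu.
Qed.

Lemma parallel_multiple u s : u <> (0, 0)%Z -> (snd u * fst s = fst u * snd s)%Z ->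
  exists t, (fst s = t * fst (primitive u) /\ snd s = t * snd (primitive u))%Z.
Proof.
  intros Hu Hc. pose proof (gcd_pos u Hu) as Hg. destruct (gcd_mul_primitive u) as [E1 E2].
  destruct u as [u1 u2], s as [s1 s2]. cbn [fst snd] in *.
  set (g := Z.gcd u1 u2) in *. set (p := primitive (u1, u2)) in *.
  destruct (Z.gcd_bezout u1 u2 g eq_refl) as [x [y Hxy]].
  exists (x * s1 + y * s2)%Z.
  assert (F1 : (g * s1 = u1 * (x * s1 + y * s2))%Z).
  { rewrite <- Hxy at 1. transitivity (x * u1 * s1 + y * (u2 * s1))%Z; [ring|].
    rewrite Hc. ring. }
  assert (F2 : (g * s2 = u2 * (x * s1 + y * s2))%Z).
  { rewrite <- Hxy at 1. transitivity (x * (u1 * s2) + y * u2 * s2)%Z; [ring|].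
    rewrite <- Hc. ring. }
  rewrite <- E1 in F1. rewrite <- E2 in F2.
  split; apply (Z.mul_reg_l _ _ g); lia.
Qed.

Definition in_box (X : Z) (p : Z * Z) : Prop := (1 <= fst p <= 2 * X - 1 /\ 1 <= snd p <= X)%Z.
Definition in_cell (X : Z) (p : Z * Z) : Prop := (X <= fst p <= 2 * X - 1 /\ 1 <= snd p <= X)%Z.
Definition cell (X : Z) : list (Z * Z) := list_prod (zrange X (Z.to_nat X)) (zrange 1 (Z.to_nat X)).

Lemma in_cell_in_box X p : (1 <= X)%Z -> in_cell X p -> in_box X p.
Proof. unfold in_cell, in_box. lia. Qed.

Lemma in_box_mono X Y p : (X <= Y)%Z -> in_box X p -> in_box Y p.
Proof. unfold in_box. lia. Qed.

Lemma in_cell_iff X p : (1 <= X)%Z -> In p (cell X) <-> in_cell X p.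
Proof.
  intros HX. destruct p as [x y]. unfold cell, in_cell.
  rewrite in_prod_iff, !in_zrange, Z2Nat.id by lia. cbn [fst snd]. lia.
Qed.

Lemma cell_NoDup X : NoDup (cell X).
Proof. apply NoDup_list_prod; apply zrange_NoDup. Qed.

Lemma length_cell X : (1 <= X)%Z -> INR (length (cell X)) = IZR X * IZR X.
Proof.
  intros. unfold cell. rewrite length_prod, !length_zrange, mult_INR, !INR_IZR_INZ.
  rewrite Z2Nat.id by lia. ring.
Qed.

Lemma secant_point_param X a b w : (1 <= X)%Z -> in_box X a -> a <> b -> in_cell X w ->
  collinear a b w ->
  exists t, (fst w = fst a + t * fst (primitive (vsub b a)) /\
             snd w = snd a + t * snd (primitive (vsub b a)) /\
             sup_norm (primitive (vsub b a)) * Z.abs t <= 2 * X - 1)%Z.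
Proof.
  intros HX Ha Hab Hw Hc. set (u := vsub b a).
  assert (Hu : u <> (0, 0)%Z).
  { intros E. apply Hab. destruct a, b. unfold u, vsub in E. simpl in E.
    injection E. intros. f_equal; lia. }
  destruct (parallel_multiple u (vsub w a) Hu) as [t [F1 F2]].
  { unfold collinear in Hc. unfold u, vsub. simpl. lia. }
  exists t. cbn [vsub fst snd] in F1, F2. split; [lia|]. split; [lia|].
  unfold sup_norm. rewrite <- Z.mul_max_distr_nonneg_r by lia. rewrite <- !Z.abs_mul.
  unfold in_box, in_cell in *. lia.
Qed.

(* A secant meets the cell in points a + t p, p primitive, spaced sup_norm p
   apart along a coordinate whose range has length < 2X. *)
Lemma secant_cell_count X a b : (1 <= X)%Z -> in_box X a -> in_box X b -> a <> b ->
  INR (length (filter (collinearb a b) (cell X))) <= 6 * IZR X * dir_weight (vsub b a).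
Proof.
  intros HX Ha Hb Hab. set (u := vsub b a). set (p := primitive u).
  assert (Hu : u <> (0, 0)%Z).
  { intros E. apply Hab. destruct a, b. unfold u, vsub in E. simpl in E.
    injection E. intros. f_equal; lia. }
  rewrite dir_weight_primitive by exact Hu. fold p. set (h := sup_norm p).
  assert (Hh : (1 <= h)%Z) by now apply sup_norm_primitive_pos.
  assert (HhX : (h <= 2 * X)%Z).
  { pose proof (sup_norm_primitive u). pose proof (gcd_pos u Hu).
    assert (sup_norm u <= 2 * X)%Z by (unfold sup_norm, u, vsub; unfold in_box in Ha, Hb; cbn [fst snd]; lia).
    fold p h in H. nia. }
  set (K := ((2 * X - 1) / h)%Z).
  assert (HK0 : (0 <= K)%Z) by (apply Z.div_pos; lia).
  assert (HKh : (h * K <= 2 * X - 1)%Z) by (apply Z.mul_div_le; lia).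
  assert (Hlen : (length (filter (collinearb a b) (cell X))
                  <= length (map (fun t => (fst a + t * fst p, snd a + t * snd p)%Z)
                                 (zrange (- K) (Z.to_nat (2 * K + 1)))))%nat).
  { apply NoDup_incl_length; [apply NoDup_filter, cell_NoDup|].
    intros w Hw. apply filter_In in Hw. destruct Hw as [Hw Hc].
    apply in_cell_iff in Hw; auto. apply Z.eqb_eq in Hc.
    destruct (secant_point_param X a b w HX Ha Hab Hw Hc) as [t [F1 [F2 Ht]]]. fold u p h in F1, F2, Ht.
    apply in_map_iff. exists t. split; [destruct w; cbn [fst snd] in *; f_equal; lia|].
    apply in_zrange. rewrite Z2Nat.id by lia.
    assert (Z.abs t <= K)%Z by (apply Z.div_le_lower_bound; lia). lia. }
  rewrite length_map, length_zrange in Hlen.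
  apply le_INR in Hlen. eapply Rle_trans; [exact Hlen|].
  rewrite INR_IZR_INZ, Z2Nat.id by lia.
  assert (Hz : ((2 * K + 1) * h <= 6 * X)%Z) by nia.
  apply IZR_le in Hz. rewrite !mult_IZR in Hz.
  assert (0 < IZR h) by (apply IZR_lt; lia).
  apply (Rmult_le_reg_r (IZR h)); auto.
  rewrite Rmult_assoc, Rinv_l by lra. lra.
Qed.

Definition weight_to (P : list (Z * Z)) (z : Z * Z) : R := sumR (fun a => dir_weight (vsub z a)) P.

Fixpoint pair_weight (P : list (Z * Z)) : R :=
  match P with [] => 0 | z :: P' => pair_weight P' + weight_to P' z end.

Lemma weight_to_nonneg P z : 0 <= weight_to P z.
Proof. apply sumR_nonneg. intros; apply dir_weight_nonneg. Qed.

Lemma pair_weight_nonneg P : 0 <= pair_weight P.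
Proof. induction P; simpl; [lra|]. pose proof (weight_to_nonneg P a). lra. Qed.

Lemma on_secant_cell_count X P : (1 <= X)%Z -> NoDup P -> (forall p, In p P -> in_box X p) ->
  INR (length (filter (on_secant P) (cell X))) <= 6 * IZR X * pair_weight P.
Proof.
  intros HX. induction P as [|z P IH]; intros HN HB.
  - replace (filter (on_secant []) (cell X)) with (@nil (Z * Z)) by (induction (cell X); auto).
    simpl; lra.
  - inversion HN as [|? ? Hz HP]; subst.
    cbn [on_secant pair_weight].
    eapply Rle_trans; [apply le_INR, length_filter_orb|]. rewrite plus_INR.
    assert (IH' := IH HP ltac:(intros; apply HB; now right)).
    enough (INR (length (filter (fun w => existsb (fun a => collinearb z a w) P) (cell X)))
            <= 6 * IZR X * weight_to P z) by lra.
    eapply Rle_trans; [apply (length_filter_existsb (fun a w => collinearb z a w))|].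
    unfold weight_to. rewrite <- sumR_scal. apply sumR_le. intros a Ha.
    rewrite dir_weight_vsub_comm. apply secant_cell_count; auto.
    + apply HB; now left.
    + apply HB; now right.
    + intros ->. contradiction.
Qed.

(** * Average weight over a cell *)

Definition harmonic (n : nat) : R := sumR (fun d => / IZR d) (zrange 1 n).

Lemma harmonic_nonneg n : 0 <= harmonic n.
Proof.
  apply sumR_nonneg. intros x Hx. apply in_zrange in Hx.
  left. apply Rinv_0_lt_compat, IZR_lt. lia.
Qed.

(* The second half of [1, 2^(j+1)] contributes at most 2^j * 1/(2^j + 1) < 1. *)
Lemma harmonic_pow2_le j : harmonic (2 ^ j) <= INR j + 1.
Proof.
  induction j.
  - unfold harmonic. simpl. lra.
  - replace (2 ^ S j)%nat with (2 ^ j + 2 ^ j)%nat by (simpl; lia).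
    unfold harmonic in *. rewrite zrange_add, sumR_app, S_INR.
    set (p := (2 ^ j)%nat) in *.
    assert (Hp : (1 <= p)%nat) by (unfold p; pose proof (Nat.pow_nonzero 2 j); lia).
    apply (le_INR 1) in Hp. simpl in Hp.
    enough (sumR (fun d => / IZR d) (zrange (1 + Z.of_nat p) p) <= 1) by lra.
    eapply Rle_trans; [apply (sumR_le_const _ _ (/ (1 + INR p)))|].
    + intros d Hd. apply in_zrange in Hd.
      rewrite INR_IZR_INZ, <- plus_IZR.
      apply Rinv_le_contravar; [apply IZR_lt|apply IZR_le]; lia.
    + rewrite length_zrange.
      apply (Rmult_le_reg_r (1 + INR p)); [lra|].
      rewrite Rmult_assoc, Rinv_l by lra. lra.
Qed.

Definition divb (d v : Z) : bool := Z.eqb (v mod d) 0.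

Lemma divb_iff d v : (0 < d)%Z -> divb d v = true <-> (d | v)%Z.
Proof. intros Hd. unfold divb. rewrite Z.eqb_eq. apply Z.mod_divide. lia. Qed.

Lemma divb_opp d v : (0 < d)%Z -> divb d (- v) = divb d v.
Proof.
  intros Hd. apply Bool.eq_true_iff_eq. rewrite !divb_iff by exact Hd.
  split; [apply Z.divide_opp_r|apply Z.divide_opp_r].
Qed.

Definition div_indicator (d v : Z) : R := if divb d v then 1 else 0.
Definition div_ratio (d v : Z) : R := if divb d v then IZR d / IZR (Z.abs v) else 0.

Lemma div_ratio_nonneg d v : (0 < d)%Z -> 0 <= div_ratio d v.
Proof.
  intros Hd. unfold div_ratio. destruct (divb d v); [|lra].
  destruct (Z.eq_dec v 0) as [->|Hv].
  - simpl. unfold Rdiv. rewrite Rinv_0. lra.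
  - apply Rle_mult_inv_pos; [apply IZR_le|apply IZR_lt]; lia.
Qed.

Lemma div_ratio_opp d v : (0 < d)%Z -> div_ratio d (- v) = div_ratio d v.
Proof. intros Hd. unfold div_ratio. now rewrite divb_opp, Z.abs_opp. Qed.

(* The term d = gcd(u1, u2) of the sum alone dominates the weight. *)
Lemma dir_weight_le_divisor_sum N u1 u2 : (u1 <> 0)%Z -> (Z.abs u1 <= Z.of_nat N)%Z ->
  dir_weight (u1, u2)
  <= sumR (fun d => div_ratio d u1 * div_indicator d u2) (zrange 1 N).
Proof.
  intros Hu HuN. set (g := Z.gcd u1 u2).
  assert (Hg : (1 <= g <= Z.abs u1)%Z).
  { split; [|now apply gcd_le_abs].
    pose proof (gcd_pos (u1, u2) ltac:(congruence)). unfold g. simpl in *. lia. }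
  eapply Rle_trans; [|apply (sumR_elem_le _ _ g)].
  - unfold div_ratio, div_indicator, dir_weight, sup_norm; cbn [fst snd].
    replace (divb g u1) with true by (symmetry; apply divb_iff; [lia|apply Z.gcd_divide_l]).
    replace (divb g u2) with true by (symmetry; apply divb_iff; [lia|apply Z.gcd_divide_r]).
    rewrite Rmult_1_r. fold g.
    assert (0 < IZR (Z.abs u1)) by (apply IZR_lt; lia).
    assert (IZR (Z.abs u1) <= IZR (Z.max (Z.abs u1) (Z.abs u2))) by (apply IZR_le; lia).
    assert (0 <= IZR g) by (apply IZR_le; lia).
    unfold Rdiv. apply Rmult_le_compat_l; auto. apply Rinv_le_contravar; lra.
  - apply in_zrange. lia.
  - intros d Hd. apply in_zrange in Hd. apply Rmult_le_pos; [apply div_ratio_nonneg; lia|].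
    unfold div_indicator. destruct (divb d u2); lra.
Qed.

Lemma count_congruent X d c : (1 <= X)%Z -> (1 <= d)%Z ->
  sumR (fun z => div_indicator d (z - c)) (zrange 1 (Z.to_nat X)) <= IZR X / IZR d + 1.
Proof.
  intros HX Hd.
  set (L := Z.to_nat (X / d - 1 / d + 1)).
  assert (HXd : (1 / d <= X / d)%Z) by (apply Z.div_le_mono; lia).
  eapply Rle_trans.
  { apply (sumR_le_reindex _ (fun z => divb d (z - c)) (fun z => z / d)%Z (fun _ => 1) _
             (zrange (1 / d) L)); unfold div_indicator.
    - apply zrange_NoDup.
    - intros x _ ->. lra.
    - intros x Hx ->. split; [|lra]. apply in_zrange in Hx. apply in_zrange. unfold L.
      rewrite Z2Nat.id by lia.
      assert (1 / d <= x / d <= X / d)%Z by (split; apply Z.div_le_mono; lia). lia.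
    - intros x y _ _ Ex Ey E.
      apply divb_iff in Ex, Ey; try lia. destruct Ex as [kx Ex], Ey as [ky Ey].
      replace x with (c + kx * d)%Z in E by lia. replace y with (c + ky * d)%Z in E by lia.
      rewrite !Z.div_add in E by lia. lia.
    - intros; lra. }
  rewrite sumR_const, length_zrange, Rmult_1_r. unfold L.
  rewrite INR_IZR_INZ, Z2Nat.id by lia. rewrite plus_IZR, minus_IZR.
  assert (0 <= IZR (1 / d)) by (apply IZR_le, Z.div_pos; lia).
  enough (IZR (X / d) <= IZR X / IZR d) by lra.
  assert (0 < IZR d) by (apply IZR_lt; lia).
  apply (Rmult_le_reg_l (IZR d)); auto.
  replace (IZR d * (IZR X / IZR d)) with (IZR X) by (field; lra).
  rewrite <- mult_IZR. apply IZR_le, Z.mul_div_le. lia.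
Qed.

(* The positive v divisible by d are the k * d, contributing d / (k d) = 1/k. *)
Lemma sum_div_ratio_pos_le d N l : (1 <= d)%Z -> NoDup l -> (forall v, In v l -> v <= Z.of_nat N)%Z ->
  sumR (fun v => if (0 <? v)%Z then div_ratio d v else 0) l <= harmonic N.
Proof.
  intros Hd Hl HN. unfold harmonic, div_ratio.
  apply (sumR_le_reindex _ (fun v => (0 <? v)%Z && divb d v) (fun v => v / d)%Z); auto.
  - intros v _. destruct (0 <? v)%Z, (divb d v); simpl; lra || discriminate.
  - intros v Hv E. apply andb_prop in E. destruct E as [Hpos Hdv].
    apply Z.ltb_lt in Hpos. rewrite Hdv. replace (0 <? v)%Z with true by (symmetry; now apply Z.ltb_lt).
    apply divb_iff in Hdv; [|lia]. destruct Hdv as [k ->].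
    specialize (HN _ Hv). rewrite Z.div_mul by lia.
    assert (1 <= k)%Z by nia.
    split; [apply in_zrange; nia|].
    rewrite Z.abs_eq, mult_IZR by nia.
    assert (0 < IZR k) by (apply IZR_lt; lia). assert (0 < IZR d) by (apply IZR_lt; lia).
    right. field. lra.
  - intros x y _ _ Ex Ey E.
    apply andb_prop in Ex, Ey. destruct Ex as [_ Ex], Ey as [_ Ey].
    apply divb_iff in Ex, Ey; try lia.
    destruct Ex as [kx ->], Ey as [ky ->]. rewrite !Z.div_mul in E by lia. now subst.
  - intros y Hy. apply in_zrange in Hy. left. apply Rinv_0_lt_compat, IZR_lt. lia.
Qed.

Lemma sum_div_ratio_le d N l : (1 <= d)%Z -> NoDup l -> (forall v, In v l -> Z.abs v <= Z.of_nat N)%Z ->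
  sumR (div_ratio d) l <= 2 * harmonic N.
Proof.
  intros Hd Hl HN.
  set (pos := fun v => if (0 <? v)%Z then div_ratio d v else 0).
  apply Rle_trans with (sumR pos l + sumR pos (map Z.opp l)).
  - rewrite sumR_map, <- sumR_plus. apply sumR_le. intros v _. unfold pos.
    rewrite div_ratio_opp by lia. pose proof (div_ratio_nonneg d v ltac:(lia)).
    destruct (Z.ltb_spec 0 v), (Z.ltb_spec 0 (- v)); try lra.
    replace v with 0%Z by lia. unfold div_ratio. simpl. unfold Rdiv. rewrite Rinv_0.
    destruct (divb d 0); lra.
  - assert (H1 : sumR pos l <= harmonic N).
    { apply sum_div_ratio_pos_le; auto. intros v Hv. specialize (HN v Hv). lia. }
    assert (H2 : sumR pos (map Z.opp l) <= harmonic N).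
    { apply sum_div_ratio_pos_le; auto.
      - apply NoDup_map_NoDup_ForallPairs; auto. intros x y _ _ E. lia.
      - intros v Hv. apply in_map_iff in Hv. destruct Hv as [x [<- Hx]].
        specialize (HN x Hx). lia. }
    lra.
Qed.

Definition avg_bound (X : Z) : R :=
  IZR X + 2 * harmonic (Z.to_nat (2 * X)) * (IZR X * harmonic (Z.to_nat (2 * X)) + 2 * IZR X).

Lemma avg_bound_nonneg X : (1 <= X)%Z -> 0 <= avg_bound X.
Proof.
  intros. unfold avg_bound. pose proof (harmonic_nonneg (Z.to_nat (2 * X))).
  assert (1 <= IZR X) by (apply IZR_le; lia).
  assert (0 <= IZR X * harmonic (Z.to_nat (2 * X))) by (apply Rmult_le_pos; lra).
  assert (0 <= 2 * harmonic (Z.to_nat (2 * X)) * (IZR X * harmonic (Z.to_nat (2 * X)) + 2 * IZR X))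
    by (apply Rmult_le_pos; lra).
  lra.
Qed.

Lemma sum_column_le X z1 a :
  (1 <= X)%Z -> in_box X a -> (X <= z1 <= 2 * X - 1)%Z ->
  sumR (fun z2 => dir_weight (vsub (z1, z2) a)) (zrange 1 (Z.to_nat X))
  <= (if (z1 =? fst a)%Z then IZR X else 0)
     + sumR (fun d => div_ratio d (z1 - fst a)
                      * sumR (fun z2 => div_indicator d (z2 - snd a)) (zrange 1 (Z.to_nat X)))
            (zrange 1 (Z.to_nat (2 * X))).
Proof.
  intros HX Ha Hz1. destruct a as [a1 a2]. unfold in_box in Ha. cbn [fst snd] in *.
  destruct (Z.eqb_spec z1 a1) as [->|Hne].
  - assert (0 <= sumR (fun d => div_ratio d (a1 - a1)
                 * sumR (fun z2 => div_indicator d (z2 - a2)) (zrange 1 (Z.to_nat X)))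
                 (zrange 1 (Z.to_nat (2 * X)))).
    { apply sumR_nonneg. intros d Hd. apply in_zrange in Hd.
      apply Rmult_le_pos; [apply div_ratio_nonneg; lia|].
      apply sumR_nonneg. intros. unfold div_indicator. destruct (divb _ _); lra. }
    eapply Rle_trans; [apply (sumR_le_const _ _ 1); intros; apply dir_weight_le_1|].
    rewrite length_zrange, INR_IZR_INZ, Z2Nat.id by lia. lra.
  - rewrite Rplus_0_l.
    eapply Rle_trans.
    { apply sumR_le. intros z2 _. apply (dir_weight_le_divisor_sum (Z.to_nat (2 * X))); cbn [fst snd]; [lia|rewrite Z2Nat.id; lia]. }
    cbn [fst snd]. rewrite sumR_swap. apply Req_le, sumR_ext. intros d _.
    rewrite <- sumR_scal. apply sumR_ext. intros. ring.
Qed.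

Lemma sum_point_indicator_le (l : list Z) x c : NoDup l -> 0 <= c ->
  sumR (fun z => if (z =? x)%Z then c else 0) l <= c.
Proof.
  intros Hl Hc. eapply Rle_trans; [|apply Req_le, (Rplus_0_r c)].
  apply (sumR_le_reindex _ (fun z => (z =? x)%Z) (fun z => z) (fun _ => c) _ [x]).
  - exact Hl.
  - intros z _ ->. lra.
  - intros z _ E. rewrite E. apply Z.eqb_eq in E. subst. simpl. split; auto; lra.
  - intros y z _ _ Ey Ez _. apply Z.eqb_eq in Ey, Ez. congruence.
  - intros; exact Hc.
Qed.

Lemma sum_divisor_terms_le X a : (1 <= X)%Z -> in_box X a ->
  sumR (fun d => sumR (fun z1 => div_ratio d (z1 - fst a)) (zrange X (Z.to_nat X))
                 * sumR (fun z2 => div_indicator d (z2 - snd a)) (zrange 1 (Z.to_nat X)))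
       (zrange 1 (Z.to_nat (2 * X)))
  <= 2 * harmonic (Z.to_nat (2 * X)) * (IZR X * harmonic (Z.to_nat (2 * X)) + 2 * IZR X).
Proof.
  intros HX Ha. unfold in_box in Ha. destruct a as [a1 a2]. cbn [fst snd] in *.
  set (N := Z.to_nat (2 * X)).
  assert (HN : Z.of_nat N = (2 * X)%Z) by (unfold N; rewrite Z2Nat.id; lia).
  eapply Rle_trans.
  { apply sumR_le. intros d Hd. apply in_zrange in Hd.
    apply (Rmult_le_compat _ (2 * harmonic N) _ (IZR X / IZR d + 1)).
    - apply sumR_nonneg. intros. apply div_ratio_nonneg. lia.
    - apply sumR_nonneg. intros. unfold div_indicator. destruct (divb _ _); lra.
    - rewrite <- (sumR_map (div_ratio d) (fun z1 => z1 - a1)%Z).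
      apply sum_div_ratio_le; [lia| |].
      + apply NoDup_map_NoDup_ForallPairs; [intros x y _ _ E; lia|apply zrange_NoDup].
      + intros v Hv. apply in_map_iff in Hv. destruct Hv as [z1 [<- Hz1]].
        apply in_zrange in Hz1. lia.
    - apply count_congruent; lia. }
  rewrite (sumR_ext _ (fun d => 2 * harmonic N * (IZR X * / IZR d) + 2 * harmonic N * 1))
    by (intros; unfold Rdiv; ring).
  rewrite sumR_plus, !sumR_scal, sumR_const, length_zrange.
  replace (INR N) with (2 * IZR X) by (rewrite INR_IZR_INZ, HN, mult_IZR; reflexivity).
  apply Req_le. unfold harmonic. ring.
Qed.

(* Bounding each weight by its divisor sum, the double sum over the cell
   factors into one sum per coordinate; the column z1 = a1 contributes <= X. *)
Lemma sum_dir_weight_cell_le X a : (1 <= X)%Z -> in_box X a ->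
  sumR (fun z => dir_weight (vsub z a)) (cell X) <= avg_bound X.
Proof.
  intros HX Ha. unfold cell. rewrite sumR_list_prod.
  eapply Rle_trans.
  { apply sumR_le. intros z1 Hz1. apply in_zrange in Hz1. rewrite Z2Nat.id in Hz1 by lia.
    apply sum_column_le; auto; lia. }
  rewrite sumR_plus. unfold avg_bound. apply Rplus_le_compat.
  - apply sum_point_indicator_le; [apply zrange_NoDup|apply IZR_le; lia].
  - rewrite sumR_swap.
    eapply Rle_trans; [|apply (sum_divisor_terms_le X a HX Ha)].
    apply Req_le, sumR_ext. intros d _.
    rewrite Rmult_comm, <- sumR_scal. apply sumR_ext. intros. ring.
Qed.

Lemma avg_bound_pow2_le k : avg_bound (2 ^ Z.of_nat k) <= 7 * 2 ^ k * (INR k + 2) ^ 2.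
Proof.
  unfold avg_bound.
  replace (Z.to_nat (2 * 2 ^ Z.of_nat k)) with (2 ^ S k)%nat.
  2:{ apply Nat2Z.inj. pose proof (Z.pow_nonneg 2 (Z.of_nat k)).
      rewrite Z2Nat.id, Nat2Z.inj_pow by lia. simpl (Z.of_nat 2). rewrite Nat2Z.inj_succ, Z.pow_succ_r by lia. reflexivity. }
  rewrite <- pow_IZR.
  pose proof (harmonic_pow2_le (S k)) as H. rewrite S_INR in H.
  pose proof (harmonic_nonneg (2 ^ S k)). pose proof (pos_INR k).
  assert (1 <= 2 ^ k) by (apply pow_R1_Rle; lra).
  set (h := harmonic (2 ^ S k)) in *. set (Y := 2 ^ k) in *.
  assert (2 * h * (Y * h + 2 * Y) <= 2 * (INR k + 2) * (Y * (INR k + 2) + 2 * Y))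
    by (apply Rmult_le_compat; nra).
  nra.
Qed.

(** * Greedy extension *)

Definition memb (z : Z * Z) (P : list (Z * Z)) : bool :=
  if in_dec Zpair_dec z P then true else false.

Lemma memb_iff z P : memb z P = true <-> In z P.
Proof. unfold memb. destruct (in_dec Zpair_dec z P); split; auto; discriminate. Qed.

Lemma many_free_points X P : (1 <= X)%Z -> NoDup P -> (forall p, In p P -> in_box X p) ->
  INR (length P) + 6 * IZR X * pair_weight P <= IZR X * IZR X / 2 ->
  IZR X * IZR X / 2
  <= INR (length (filter (fun z => negb (on_secant P z || memb z P)) (cell X))).
Proof.
  intros HX HN HB Hc.
  pose proof (length_filter_negb (fun z => on_secant P z || memb z P) (cell X)) as E.
  apply (f_equal INR) in E. rewrite plus_INR, length_cell in E by auto.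
  assert (H1 := length_filter_orb (on_secant P) (fun z => memb z P) (cell X)).
  assert (H2 : (length (filter (fun z => memb z P) (cell X)) <= length P)%nat).
  { apply NoDup_incl_length; [apply NoDup_filter, cell_NoDup|].
    intros z Hz. apply filter_In in Hz. now apply memb_iff. }
  pose proof (on_secant_cell_count X P HX HN HB).
  apply le_INR in H1, H2. rewrite plus_INR in H1. lra.
Qed.

Lemma sum_weight_to_cell_le X P : (1 <= X)%Z -> (forall p, In p P -> in_box X p) ->
  sumR (weight_to P) (cell X) <= INR (length P) * avg_bound X.
Proof.
  intros HX HB. unfold weight_to. rewrite sumR_swap.
  apply sumR_le_const. intros a Ha. now apply sum_dir_weight_cell_le, HB.
Qed.

(* Half of the cell is free, so some free point has at most twice the average weight. *)
Lemma exists_good_point X P : (1 <= X)%Z -> gp_list P -> (forall p, In p P -> in_box X p) ->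
  INR (length P) + 6 * IZR X * pair_weight P <= IZR X * IZR X / 2 ->
  exists z, in_cell X z /\ gp_list (z :: P) /\
            weight_to P z <= 2 * INR (length P) * avg_bound X / (IZR X * IZR X).
Proof.
  intros HX HG HB Hc.
  assert (HX0 : 0 < IZR X) by (apply IZR_lt; lia).
  set (free := filter (fun z => negb (on_secant P z || memb z P)) (cell X)).
  assert (Hfree : IZR X * IZR X / 2 <= INR (length free))
    by (apply many_free_points; auto; apply HG).
  assert (Hne : free <> []) by (intros E; rewrite E in Hfree; simpl in Hfree; nra).
  destruct (sumR_exists_le_average (weight_to P) free Hne) as [z [Hz Hzw]].
  unfold free in Hz. apply filter_In in Hz. destruct Hz as [Hz Hq].
  apply Bool.negb_true_iff, Bool.orb_false_elim in Hq. destruct Hq as [Hs Hm].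
  exists z. split; [now apply in_cell_iff|]. split.
  { apply gp_list_cons; auto. now rewrite <- memb_iff, Hm. }
  assert (Hsum : sumR (weight_to P) free <= INR (length P) * avg_bound X).
  { eapply Rle_trans; [apply sumR_filter_le|now apply sum_weight_to_cell_le].
    intros; apply weight_to_nonneg. }
  pose proof (weight_to_nonneg P z).
  apply (Rmult_le_reg_l (IZR X * IZR X / 2)); [nra|].
  replace (IZR X * IZR X / 2 * (2 * INR (length P) * avg_bound X / (IZR X * IZR X)))
    with (INR (length P) * avg_bound X) by (field; lra).
  nra.
Qed.

Lemma greedy_extension X m P (Mtot : nat) (iota : R) :
  (1 <= X)%Z -> gp_list P -> (forall p, In p P -> in_box X p) ->
  (length P + m <= Mtot)%nat ->
  2 * INR Mtot * avg_bound X / (IZR X * IZR X) <= iota ->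
  INR Mtot + 6 * IZR X * (pair_weight P + INR m * iota) <= IZR X * IZR X / 2 ->
  exists B, length B = m /\ gp_list (B ++ P) /\ (forall z, In z B -> in_cell X z) /\
            pair_weight (B ++ P) <= pair_weight P + INR m * iota.
Proof.
  intros HX. revert P. induction m as [|m IH]; intros P HG HB Hlen Hiota Hc.
  - exists []. simpl. split; [reflexivity|]. split; [exact HG|]. split; [intros _ []|lra].
  - assert (HX0 : 0 < IZR X) by (apply IZR_lt; lia).
    assert (Hio : 0 <= iota).
    { eapply Rle_trans; [|exact Hiota].
      pose proof (pos_INR Mtot). pose proof (avg_bound_nonneg X HX).
      apply Rmult_le_pos; [nra|]. left. apply Rinv_0_lt_compat. nra. }
    pose proof (pair_weight_nonneg P). pose proof (pos_INR m).
    apply le_INR in Hlen. rewrite plus_INR, S_INR in Hlen. rewrite S_INR in Hc |- *.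
    destruct (exists_good_point X P HX HG HB) as [z [Hz [HGz Hzw]]].
    { assert (6 * IZR X * pair_weight P <= 6 * IZR X * (pair_weight P + (INR m + 1) * iota))
        by (apply Rmult_le_compat_l; nra).
      lra. }
    assert (Hw : weight_to P z <= iota).
    { eapply Rle_trans; [exact Hzw|]. eapply Rle_trans; [|exact Hiota].
      apply Rmult_le_compat_r; [left; apply Rinv_0_lt_compat; nra|].
      apply Rmult_le_compat_r; [now apply avg_bound_nonneg|]. lra. }
    destruct (IH (z :: P)) as [B [HBl [HBG [HBc HBw]]]]; auto.
    + intros p [<-|Hp]; [now apply in_cell_in_box|auto].
    + apply INR_le. rewrite plus_INR. simpl length. rewrite S_INR. lra.
    + eapply Rle_trans; [|exact Hc]. simpl pair_weight.
      apply Rplus_le_compat_l, Rmult_le_compat_l; lra.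
    + exists (B ++ [z]). rewrite <- app_assoc. cbn [app].
      split; [rewrite length_app; simpl; lia|]. split; [exact HBG|]. split.
      * intros y Hy. apply in_app_or in Hy. destruct Hy as [Hy|[<-|[]]]; auto.
      * simpl pair_weight in HBw. lra.
Qed.

(** * Dyadic quotas *)

Lemma exp_one_third_le : exp (1 / 3) <= 3 / 2.
Proof.
  pose proof (exp_ineq1_le (- (1 / 3))). pose proof (exp_pos (- (1 / 3))).
  pose proof (exp_pos (1 / 3)).
  assert (exp (1 / 3) * exp (- (1 / 3)) = 1)
    by (rewrite <- exp_plus, Rplus_opp_r; apply exp_0).
  nra.
Qed.

Lemma ln_le_sub_1 x : 0 < x -> ln x <= x - 1.
Proof. intros Hx. pose proof (exp_ineq1_le (ln x)). rewrite exp_ln in H by auto. lra. Qed.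

(* Any kappa with 4 kappa + 6 * 1008 kappa^2 <= 1/2 works (good_extension_exists). *)
Definition kappa : R := 1 / 200.

Section Construction.

Variable a : R.
Hypothesis a_ge_1 : 1 <= a.

Definition lam (j : nat) : R := Rpower (INR j) a.

Definition j0 : nat := Z.to_nat (up (3 * a)).

Lemma j0_large : 3 * a <= INR j0.
Proof.
  destruct (archimed (3 * a)) as [H _].
  unfold j0. rewrite INR_IZR_INZ, Z2Nat.id; [lra|].
  apply le_IZR. lra.
Qed.

Lemma j0_pos : (1 <= j0)%nat.
Proof. apply INR_le. pose proof j0_large. simpl. lra. Qed.

Lemma lam_pos j : 0 < lam j.
Proof. apply exp_pos. Qed.

Lemma lam_ge_id j : (1 <= j)%nat -> INR j <= lam j.
Proof.
  intros Hj. apply (le_INR 1) in Hj. simpl in Hj. unfold lam.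
  rewrite <- (Rpower_1 (INR j)) at 1 by lra. apply Rle_Rpower; lra.
Qed.

(* ln (j + 1) - ln j <= 1 / j and a / j <= 1/3 for j >= j0. *)
Lemma lam_succ_le j : (j0 <= j)%nat -> lam (S j) <= 3 / 2 * lam j.
Proof.
  intros Hj. assert (Hr : 3 * a <= INR j) by (pose proof j0_large; apply le_INR in Hj; lra).
  assert (Hj0 : 0 < INR j) by lra.
  unfold lam, Rpower. rewrite S_INR.
  assert (L : ln (INR j + 1) - ln (INR j) <= 1 / INR j).
  { replace (INR j + 1) with (INR j * ((INR j + 1) / INR j)) at 1 by (field; lra).
    rewrite ln_mult by (try apply Rdiv_lt_0_compat; lra).
    assert (ln ((INR j + 1) / INR j) <= (INR j + 1) / INR j - 1)
      by (apply ln_le_sub_1, Rdiv_lt_0_compat; lra).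
    replace ((INR j + 1) / INR j - 1) with (1 / INR j) in H by (field; lra). lra. }
  assert (L2 : a * ln (INR j + 1) <= 1 / 3 + a * ln (INR j)).
  { assert (a * (ln (INR j + 1) - ln (INR j)) <= a * (1 / INR j))
      by (apply Rmult_le_compat_l; lra).
    assert (a * (1 / INR j) <= 1 / 3).
    { apply (Rmult_le_reg_r (INR j)); auto.
      replace (a * (1 / INR j) * INR j) with a by (field; lra). lra. }
    lra. }
  apply Rle_trans with (exp (1 / 3 + a * ln (INR j))).
  { destruct L2 as [L2|L2]; [left; now apply exp_increasing|rewrite L2; lra]. }
  rewrite exp_plus.
  apply Rmult_le_compat_r; [left; apply exp_pos|apply exp_one_third_le].
Qed.

Lemma dyadic_ratio_growth j : (j0 <= j)%nat -> 4 / 3 * (2 ^ j / lam j) <= 2 ^ S j / lam (S j).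
Proof.
  intros Hj. pose proof (lam_succ_le j Hj). pose proof (lam_pos j). pose proof (lam_pos (S j)).
  assert (0 < 2 ^ j) by (apply pow_lt; lra).
  simpl (2 ^ S j). apply (Rmult_le_reg_r (lam j * lam (S j))); [nra|].
  replace (4 / 3 * (2 ^ j / lam j) * (lam j * lam (S j))) with (4 / 3 * 2 ^ j * lam (S j))
    by (field; lra).
  replace (2 * 2 ^ j / lam (S j) * (lam j * lam (S j))) with (2 * 2 ^ j * lam j) by (field; lra).
  nra.
Qed.

Definition quota (j : nat) : nat :=
  if (j0 <=? j)%nat then Z.to_nat (Int_part (kappa * 2 ^ j / lam j)) else 0%nat.

Fixpoint quota_total (j : nat) : nat :=
  match j with O => quota 0 | S j' => (quota_total j' + quota (S j'))%nat end.

Lemma quota_bound_nonneg j : 0 <= kappa * 2 ^ j / lam j.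
Proof.
  pose proof (lam_pos j). unfold kappa.
  apply Rmult_le_pos; [apply Rmult_le_pos; [lra|apply pow_le; lra]|].
  left. now apply Rinv_0_lt_compat.
Qed.

Lemma INR_Int_part x : 0 <= x -> INR (Z.to_nat (Int_part x)) = IZR (Int_part x).
Proof.
  intros Hx. rewrite INR_IZR_INZ, Z2Nat.id; [reflexivity|].
  destruct (base_Int_part x). assert (-1 < Int_part x)%Z by (apply lt_IZR; lra). lia.
Qed.

Lemma quota_le j : INR (quota j) <= kappa * 2 ^ j / lam j.
Proof.
  unfold quota. pose proof (quota_bound_nonneg j).
  destruct (j0 <=? j)%nat; [|simpl; lra].
  rewrite INR_Int_part by lra. apply base_Int_part.
Qed.

Lemma quota_ge j : (j0 <= j)%nat -> kappa * 2 ^ j / lam j - 1 <= INR (quota j).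
Proof.
  intros Hj. unfold quota. replace (j0 <=? j)%nat with true by (symmetry; now apply Nat.leb_le).
  rewrite INR_Int_part by apply quota_bound_nonneg.
  destruct (base_Int_part (kappa * 2 ^ j / lam j)). lra.
Qed.

Lemma quota_total_small j : (j < j0)%nat -> quota_total j = 0%nat.
Proof.
  induction j; intros H; simpl; unfold quota.
  - replace (j0 <=? 0)%nat with false by (symmetry; apply Nat.leb_gt; lia). reflexivity.
  - rewrite IHj by lia.
    replace (j0 <=? S j)%nat with false by (symmetry; apply Nat.leb_gt; lia). reflexivity.
Qed.

(* Since 2^j / lam j grows by a factor >= 4/3 per step, the partial sums of
   the quotas are dominated by a geometric series with ratio 3/4. *)
Lemma quota_total_le j : INR (quota_total j) <= 4 * kappa * 2 ^ j / lam j.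
Proof.
  pose proof (quota_bound_nonneg j).
  destruct (Nat.lt_ge_cases j j0) as [Hlt|Hge].
  - rewrite quota_total_small by exact Hlt. simpl. lra.
  - induction Hge as [|j Hj IH].
    + assert (E : quota_total j0 = quota j0).
      { pose proof j0_pos. replace j0 with (S (j0 - 1)) by lia. simpl.
        rewrite quota_total_small by lia. reflexivity. }
      rewrite E. pose proof (quota_le j0). lra.
    + simpl quota_total. rewrite plus_INR.
      pose proof (quota_le (S j)). pose proof (dyadic_ratio_growth j Hj).
      specialize (IH (quota_bound_nonneg j)).
      replace (4 * kappa * 2 ^ j / lam j) with (4 * kappa * (2 ^ j / lam j)) in IH
        by (unfold Rdiv; ring).
      replace (kappa * 2 ^ S j / lam (S j)) with (kappa * (2 ^ S j / lam (S j))) in *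
        by (unfold Rdiv; ring).
      replace (4 * kappa * 2 ^ S j / lam (S j)) with (4 * kappa * (2 ^ S j / lam (S j)))
        by (unfold Rdiv; ring).
      unfold kappa in *. lra.
Qed.

Definition step_weight (j : nat) : R := 14 * INR (quota_total j) * (INR j + 2) ^ 2 / 2 ^ j.

Lemma step_weight_ge j :
  2 * INR (quota_total j) * avg_bound (2 ^ Z.of_nat j) / (IZR (2 ^ Z.of_nat j) * IZR (2 ^ Z.of_nat j))
  <= step_weight j.
Proof.
  rewrite <- pow_IZR. pose proof (avg_bound_pow2_le j) as G.
  assert (0 < 2 ^ j) by (apply pow_lt; lra). pose proof (pos_INR (quota_total j)).
  unfold step_weight. apply (Rmult_le_reg_r (2 ^ j * 2 ^ j)); [nra|].
  replace (2 * INR (quota_total j) * avg_bound (2 ^ Z.of_nat j) / (2 ^ j * 2 ^ j) * (2 ^ j * 2 ^ j))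
    with (2 * INR (quota_total j) * avg_bound (2 ^ Z.of_nat j)) by (field; lra).
  replace (14 * INR (quota_total j) * (INR j + 2) ^ 2 / 2 ^ j * (2 ^ j * 2 ^ j))
    with (2 * INR (quota_total j) * (7 * 2 ^ j * (INR j + 2) ^ 2)) by (field; lra).
  apply Rmult_le_compat_l; lra.
Qed.

(* With (j + 2)^2 <= 9 lam_j^2: 14 * 9 * kappa * 4 kappa = 504 kappa^2. *)
Lemma quota_step_weight_le j : (1 <= j)%nat -> INR (quota j) * step_weight j <= 504 * kappa ^ 2 * 2 ^ j.
Proof.
  intros Hj. pose proof (lam_pos j) as Hl. pose proof (lam_ge_id j Hj).
  assert (1 <= INR j) by (apply (le_INR 1); lia).
  assert (0 < 2 ^ j) by (apply pow_lt; lra).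
  pose proof (quota_le j). pose proof (quota_total_le j).
  pose proof (pos_INR (quota j)). pose proof (pos_INR (quota_total j)).
  set (L := lam j) in *. set (P := 2 ^ j) in *.
  set (m := INR (quota j)) in *. set (M := INR (quota_total j)) in *.
  assert (Hm : m * L <= kappa * P)
    by (apply (Rmult_le_reg_r (/ L)); [now apply Rinv_0_lt_compat|]; field_simplify; lra).
  assert (HM : M * L <= 4 * kappa * P)
    by (apply (Rmult_le_reg_r (/ L)); [now apply Rinv_0_lt_compat|]; field_simplify; lra).
  assert (Hq : (INR j + 2) ^ 2 <= 9 * L ^ 2) by nra.
  assert (HmM : m * M * L ^ 2 <= 4 * kappa ^ 2 * P ^ 2).
  { replace (m * M * L ^ 2) with ((m * L) * (M * L)) by ring.
    replace (4 * kappa ^ 2 * P ^ 2) with ((kappa * P) * (4 * kappa * P)) by ring.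
    apply Rmult_le_compat; nra. }
  unfold step_weight. fold M P.
  apply (Rmult_le_reg_r P); [lra|].
  replace (m * (14 * M * (INR j + 2) ^ 2 / P) * P) with (14 * (m * M) * (INR j + 2) ^ 2)
    by (field; lra).
  assert (14 * (m * M) * (INR j + 2) ^ 2 <= 14 * (m * M) * (9 * L ^ 2))
    by (apply Rmult_le_compat_l; nra).
  nra.
Qed.

Lemma quota_eventually_large :
  exists J, forall K, (J <= K)%nat -> kappa * 2 ^ K / lam K <= 2 * INR (quota K).
Proof.
  set (f0 := 2 ^ j0 / lam j0).
  assert (Hf0 : 0 < f0) by (apply Rdiv_lt_0_compat; [apply pow_lt; lra|apply lam_pos]).
  assert (Hgrow : forall m, f0 * (1 + INR m / 3) <= 2 ^ (j0 + m) / lam (j0 + m)).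
  { induction m.
    - rewrite Nat.add_0_r. simpl. unfold f0. lra.
    - rewrite Nat.add_succ_r, S_INR.
      pose proof (dyadic_ratio_growth (j0 + m) ltac:(lia)).
      assert (0 <= f0 * (INR m / 3)) by (pose proof (pos_INR m); apply Rmult_le_pos; lra).
      nra. }
  destruct (archimed (1200 / f0)) as [Hup _].
  exists (j0 + Z.to_nat (up (1200 / f0)))%nat. intros K HK.
  assert (Hm : 1200 / f0 <= INR (K - j0)).
  { eapply Rle_trans; [|apply le_INR; instantiate (1 := Z.to_nat (up (1200 / f0))); lia].
    assert (0 < 1200 / f0) by (apply Rdiv_lt_0_compat; lra).
    rewrite INR_IZR_INZ, Z2Nat.id; [lra|apply le_IZR; lra]. }
  specialize (Hgrow (K - j0)%nat). replace (j0 + (K - j0))%nat with K in Hgrow by lia.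
  assert (1200 <= f0 * INR (K - j0)).
  { apply (Rmult_le_reg_r (/ f0)); [now apply Rinv_0_lt_compat|].
    replace (f0 * INR (K - j0) * / f0) with (INR (K - j0)) by (field; lra). exact Hm. }
  pose proof (quota_ge K ltac:(lia)).
  replace (kappa * 2 ^ K / lam K) with (kappa * (2 ^ K / lam K)) in * by (unfold Rdiv; ring).
  unfold kappa in *. lra.
Qed.

Lemma in_grid n p : In p (grid n) <-> (1 <= fst p <= Z.of_nat n /\ 1 <= snd p <= Z.of_nat n)%Z.
Proof.
  destruct p as [x y]. unfold grid. rewrite in_prod_iff, !in_map_iff. cbn [fst snd]. split.
  - intros [[i [<- Hi]] [j [<- Hj]]]. apply in_seq in Hi, Hj. lia.
  - intros H. split; [exists (Z.to_nat x)|exists (Z.to_nat y)]; split; try lia; apply in_seq; lia.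
Qed.

Lemma grid_NoDup n : NoDup (grid n).
Proof.
  unfold grid. apply NoDup_list_prod; apply NoDup_map_NoDup_ForallPairs;
    try (intros x y _ _ E; lia); apply seq_NoDup.
Qed.

Definition side (j : nat) : Z := (2 ^ Z.of_nat j)%Z.

Lemma side_ge_1 j : (1 <= side j)%Z.
Proof. unfold side. pose proof (Z.pow_pos_nonneg 2 (Z.of_nat j)). lia. Qed.

Lemma side_succ j : side (S j) = (2 * side j)%Z.
Proof. unfold side. rewrite Nat2Z.inj_succ, Z.pow_succ_r by lia. ring. Qed.

Lemma IZR_side j : IZR (side j) = 2 ^ j.
Proof. unfold side. now rewrite <- pow_IZR. Qed.

Lemma side_gt_id j : (Z.of_nat j < side j)%Z.
Proof. apply Z.pow_gt_lin_r; lia. Qed.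

Definition good_extension (j : nat) (P B : list (Z * Z)) : Prop :=
  length B = quota j /\ gp_list (B ++ P) /\ (forall z, In z B -> in_cell (side j) z) /\
  pair_weight (B ++ P) <= pair_weight P + INR (quota j) * step_weight j.

Definition extension (j : nat) (P : list (Z * Z)) : list (Z * Z) :=
  epsilon (inhabits []) (good_extension j P).

Fixpoint chosen (k : nat) : list (Z * Z) :=
  match k with O => [] | S k' => extension (S k') (chosen k') ++ chosen k' end.

(* The weight budget 1008 kappa^2 2^k is preserved because each extension adds
   at most 504 kappa^2 2^(k+1) (quota_step_weight_le). *)
Definition chosen_inv (k : nat) : Prop :=
  gp_list (chosen k) /\ (forall p, In p (chosen k) -> in_box (side k) p) /\
  length (chosen k) = quota_total k /\ pair_weight (chosen k) <= 1008 * kappa ^ 2 * 2 ^ k.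

Lemma quota_total_le_pow2 j : (1 <= j)%nat -> INR (quota_total j) <= 4 * kappa * 2 ^ j.
Proof.
  intros Hj. eapply Rle_trans; [apply quota_total_le|].
  pose proof (lam_ge_id j Hj). assert (1 <= INR j) by (apply (le_INR 1); lia).
  assert (0 < 2 ^ j) by (apply pow_lt; lra).
  apply (Rmult_le_reg_r (lam j)); [apply lam_pos|].
  replace (4 * kappa * 2 ^ j / lam j * lam j) with (4 * kappa * 2 ^ j) by (field; lra).
  unfold kappa. nra.
Qed.

Lemma good_extension_exists k : chosen_inv k -> exists B, good_extension (S k) (chosen k) B.
Proof.
  intros [HG [HB [Hlen Hw]]]. set (j := S k).
  assert (HX : IZR (side j) = 2 ^ j) by apply IZR_side.
  assert (Hpow : 2 ^ j = 2 * 2 ^ k) by reflexivity.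
  assert (0 < 2 ^ k) by (apply pow_lt; lra).
  pose proof (quota_total_le_pow2 j ltac:(unfold j; lia)).
  pose proof (quota_step_weight_le j ltac:(unfold j; lia)).
  apply (greedy_extension (side j) (quota j) (chosen k) (quota_total j) (step_weight j)).
  - apply side_ge_1.
  - exact HG.
  - intros p Hp. apply (in_box_mono (side k)); [|auto].
    unfold j. rewrite side_succ. pose proof (side_ge_1 k). lia.
  - rewrite Hlen. unfold j. simpl. lia.
  - apply step_weight_ge.
  - rewrite HX. unfold kappa in *. rewrite Hpow in *.
    assert (1 <= 2 ^ k) by (apply pow_R1_Rle; lra).
    assert (pair_weight (chosen k) + INR (quota j) * step_weight j <= 2 ^ k / 16) by lra.
    nra.
Qed.

Lemma extension_good_of_inv k :
  chosen_inv k -> good_extension (S k) (chosen k) (extension (S k) (chosen k)).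
Proof.
  intros Hk. destruct (good_extension_exists k Hk) as [B HB].
  exact (epsilon_spec (inhabits []) _ (ex_intro _ B HB)).
Qed.

Lemma chosen_inv_all k : chosen_inv k.
Proof.
  induction k.
  - split; [apply gp_list_nil|]. split; [intros _ []|].
    split; [rewrite quota_total_small by (pose proof j0_pos; lia); reflexivity|].
    simpl. unfold kappa. lra.
  - destruct (extension_good_of_inv k IHk) as [Hl [HG [Hc Hw]]].
    destruct IHk as [_ [HB [Hlen Hwk]]].
    pose proof (quota_step_weight_le (S k) ltac:(lia)).
    split; [exact HG|]. split; [|split].
    + intros p Hp. apply in_app_or in Hp. destruct Hp as [Hp|Hp].
      * apply in_cell_in_box; [apply side_ge_1|auto].
      * apply (in_box_mono (side k)); auto. rewrite side_succ. pose proof (side_ge_1 k). lia.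
    + simpl chosen. rewrite length_app, Hl, Hlen. simpl. lia.
    + simpl chosen. simpl pow in *. lra.
Qed.

Lemma extension_good k : good_extension (S k) (chosen k) (extension (S k) (chosen k)).
Proof. apply extension_good_of_inv, chosen_inv_all. Qed.

Lemma chosen_mono j k : (j <= k)%nat -> incl (chosen j) (chosen k).
Proof.
  induction 1; [apply incl_refl|].
  simpl. intros p Hp. apply in_or_app. right. auto.
Qed.

Lemma chosen_origin k p : In p (chosen k) ->
  exists j, (1 <= j <= k)%nat /\ in_cell (side j) p /\ In p (chosen j).
Proof.
  induction k; simpl; [intros []|]. intros Hp. apply in_app_or in Hp.
  destruct Hp as [Hp|Hp].
  - exists (S k). split; [lia|]. split.
    + destruct (extension_good k) as [_ [_ [Hc _]]]. auto.
    + simpl. apply in_or_app. auto.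
  - destruct (IHk Hp) as [j [Hj Hj']]. exists j. split; [lia|auto].
Qed.

(* A point of the j-th block has abscissa x >= 2^j > j, so it already lies in
   chosen (Z.to_nat x). *)
Definition gp_set (x y : Z) : bool := memb (x, y) (chosen (Z.to_nat x)).

Lemma gp_set_spec x y : gp_set x y = true <-> exists k, In (x, y) (chosen k).
Proof.
  unfold gp_set. rewrite memb_iff. split; [eauto|].
  intros [k Hk]. destruct (chosen_origin k _ Hk) as [j [_ [[Hx _] Hj]]].
  cbn [fst snd] in Hx. pose proof (side_gt_id j).
  apply (chosen_mono j); [lia|exact Hj].
Qed.

Lemma gp_set_general_position : general_position gp_set.
Proof.
  intros [p1 p2] [q1 q2] [r1 r2] Hp Hq Hr. cbn [fst snd] in *.
  apply gp_set_spec in Hp as [kp Hp], Hq as [kq Hq], Hr as [kr Hr].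
  set (K := Nat.max kp (Nat.max kq kr)).
  destruct (chosen_inv_all K) as [[_ HG] _]. apply HG.
  - apply (chosen_mono kp); [lia|exact Hp].
  - apply (chosen_mono kq); [lia|exact Hq].
  - apply (chosen_mono kr); [lia|exact Hr].
Qed.

Lemma quota_le_count K n : (1 <= K)%nat -> (2 ^ S K <= n)%nat ->
  (quota K <= count_in_box gp_set n)%nat.
Proof.
  intros HK Hn. destruct K as [|k]; [lia|].
  destruct (extension_good k) as [Hl [HG [Hc _]]].
  rewrite <- Hl. unfold count_in_box. apply NoDup_incl_length.
  - apply (NoDup_app_remove_r _ (chosen k)), HG.
  - intros [x y] Hp. apply filter_In. split.
    + apply in_grid. destruct (Hc _ Hp) as [H1 H2].
      assert (Z.of_nat (2 ^ S (S k)) = 2 * side (S k))%Z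
        by (rewrite <- side_succ; unfold side; now rewrite Nat2Z.inj_pow).
      apply inj_le in Hn. pose proof (side_ge_1 (S k)). lia.
    + apply gp_set_spec. exists (S k). simpl. apply in_or_app. now left.
Qed.

Lemma count_le_quota_total K n : (n < 2 ^ S K)%nat -> (count_in_box gp_set n <= quota_total K)%nat.
Proof.
  intros Hn. destruct (chosen_inv_all K) as [[HN _] [_ [Hlen _]]]. rewrite <- Hlen.
  unfold count_in_box. apply NoDup_incl_length; [apply NoDup_filter, grid_NoDup|].
  intros [x y] Hp. apply filter_In in Hp. destruct Hp as [Hg Hs].
  apply in_grid in Hg. cbn [fst snd] in Hg.
  apply gp_set_spec in Hs as [k Hk]. destruct (chosen_origin k _ Hk) as [j [_ [[Hx _] Hj]]].
  apply (chosen_mono j); [|exact Hj].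
  cbn [fst snd] in Hx. apply inj_lt in Hn. rewrite Nat2Z.inj_pow in Hn.
  unfold side in Hx. simpl (Z.of_nat 2) in Hn.
  assert (2 ^ Z.of_nat j < 2 ^ Z.of_nat (S K))%Z by lia.
  apply Z.pow_lt_mono_r_iff in H; lia.
Qed.

(** * Density *)

Lemma dyadic_decomposition J n : (2 ^ S J <= n)%nat ->
  exists K, (J <= K)%nat /\ (2 ^ S K <= n < 2 ^ S (S K))%nat.
Proof.
  intros Hn. assert (Hn0 : (0 < n)%nat) by (pose proof (Nat.pow_nonzero 2 (S J)); lia).
  pose proof (proj1 (Nat.log2_le_pow2 n (S J) Hn0) Hn).
  destruct (Nat.log2_spec n Hn0) as [H1 H2].
  exists (Nat.log2 n - 1)%nat. replace (S (Nat.log2 n - 1)) with (Nat.log2 n) by lia.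
  split; [lia|auto].
Qed.

Lemma ln_2_lt_1 : ln 2 < 1.
Proof.
  rewrite <- ln_exp. apply ln_increasing; [lra|].
  pose proof (exp_ineq1 1 ltac:(lra)). lra.
Qed.

Lemma ln_le_ln x y : 0 < x -> x <= y -> ln x <= ln y.
Proof. intros Hx [H| ->]; [left; now apply ln_increasing|lra]. Qed.

Lemma ln_dyadic_bounds K n : (2 ^ S K <= n < 2 ^ S (S K))%nat ->
  INR (S K) * ln 2 <= ln (INR n) <= INR (S (S K)) * ln 2.
Proof.
  intros [H1 H2]. apply le_INR in H1. apply lt_INR in H2. rewrite !pow_INR in *.
  replace (INR 2) with 2 in * by (simpl; lra).
  assert (0 < 2 ^ S K) by (apply pow_lt; lra).
  rewrite <- !ln_pow by lra. split; apply ln_le_ln; lra.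
Qed.

Lemma lam_mul_ln2_le K n : (1 <= K)%nat -> (2 ^ S K <= n < 2 ^ S (S K))%nat ->
  lam K * Rpower (ln 2) a <= Rpower (ln (INR n)) a.
Proof.
  intros HK Hn. pose proof (ln_dyadic_bounds K n Hn) as [Hlo _].
  pose proof ln_lt_2. assert (1 <= INR K) by (apply (le_INR 1); lia).
  unfold lam. rewrite Rpower_mult_distr by lra.
  apply Rle_Rpower_l; [lra|]. rewrite S_INR in Hlo. split; nra.
Qed.

Lemma log_power_le_lam K n : (2 ^ S K <= n < 2 ^ S (S K))%nat ->
  Rpower (ln (INR n)) a <= lam (S (S K)).
Proof.
  intros Hn. pose proof (ln_dyadic_bounds K n Hn) as [Hlo Hhi].
  pose proof ln_lt_2. pose proof ln_2_lt_1. pose proof (pos_INR (S (S K))).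
  assert (0 < INR (S K)) by (apply lt_0_INR; lia).
  apply Rle_Rpower_l; [lra|]. split; nra.
Qed.

Lemma count_lower_bound : exists N, forall n, (N <= n)%nat ->
  kappa * Rpower (ln 2) a / 8 * INR n / Rpower (ln (INR n)) a <= INR (count_in_box gp_set n).
Proof.
  destruct quota_eventually_large as [J HJ].
  exists (2 ^ S (S J))%nat. intros n Hn.
  destruct (dyadic_decomposition (S J) n Hn) as [K [HK Hdy]].
  eapply Rle_trans; [|apply le_INR, (quota_le_count K); [lia|apply Hdy]].
  pose proof (HJ K ltac:(lia)) as Hq.
  pose proof (lam_mul_ln2_le K n ltac:(lia) Hdy) as Hl.
  assert (Hn4 : INR n <= 4 * 2 ^ K).
  { destruct Hdy as [_ H]. apply lt_INR in H. rewrite pow_INR in H.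
    replace (INR 2) with 2 in H by (simpl; lra). simpl in H. lra. }
  pose proof (lam_pos K). assert (0 < 2 ^ K) by (apply pow_lt; lra).
  assert (0 < Rpower (ln 2) a) by apply exp_pos.
  assert (0 < Rpower (ln (INR n)) a) by apply exp_pos.
  apply (Rmult_le_reg_r (Rpower (ln (INR n)) a)); [lra|].
  replace (kappa * Rpower (ln 2) a / 8 * INR n / Rpower (ln (INR n)) a * Rpower (ln (INR n)) a)
    with (kappa * Rpower (ln 2) a / 8 * INR n) by (field; lra).
  apply Rle_trans with (kappa * 2 ^ K / lam K / 2 * (lam K * Rpower (ln 2) a)).
  - replace (kappa * 2 ^ K / lam K / 2 * (lam K * Rpower (ln 2) a))
      with (kappa * Rpower (ln 2) a / 8 * (4 * 2 ^ K)) by (field; lra).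
    apply Rmult_le_compat_l; [unfold kappa; apply Rmult_le_pos; lra|lra].
  - apply Rmult_le_compat; try lra.
    + pose proof (quota_bound_nonneg K). lra.
    + apply Rmult_le_pos; lra.
Qed.

Lemma count_upper_bound n : (2 ^ S j0 <= n)%nat ->
  INR (count_in_box gp_set n) <= 6 * kappa * INR n / Rpower (ln (INR n)) a.
Proof.
  intros Hn. destruct (dyadic_decomposition j0 n Hn) as [K [HK Hdy]].
  eapply Rle_trans; [apply le_INR, (count_le_quota_total (S K)), Hdy|].
  eapply Rle_trans; [apply quota_total_le|].
  pose proof (lam_succ_le (S K) ltac:(lia)). pose proof (log_power_le_lam K n Hdy).
  assert (H2n : 2 ^ S K <= INR n).
  { destruct Hdy as [Hlo _]. apply le_INR in Hlo. rewrite pow_INR in Hlo.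
    replace (INR 2) with 2 in Hlo by (simpl; lra). exact Hlo. }
  pose proof (lam_pos (S K)). assert (0 < 2 ^ S K) by (apply pow_lt; lra).
  assert (0 < Rpower (ln (INR n)) a) by apply exp_pos.
  apply (Rmult_le_reg_r (lam (S K) * Rpower (ln (INR n)) a)); [nra|].
  replace (4 * kappa * 2 ^ S K / lam (S K) * (lam (S K) * Rpower (ln (INR n)) a))
    with (4 * kappa * 2 ^ S K * Rpower (ln (INR n)) a) by (field; lra).
  replace (6 * kappa * INR n / Rpower (ln (INR n)) a * (lam (S K) * Rpower (ln (INR n)) a))
    with (6 * kappa * INR n * lam (S K)) by (field; lra).
  unfold kappa. nra.
Qed.

End Construction.

Theorem theorem1p3 :
  forall eps : R, 0 < eps ->
  exists S : Z -> Z -> bool,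
    general_position S /\
    exists c C : R, 0 < c /\ 0 < C /\
    exists N : nat, (2 <= N)%nat /\
    forall n : nat, (N <= n)%nat ->
      c * INR n / Rpower (ln (INR n)) (1 + eps) <= INR (count_in_box S n) /\
      INR (count_in_box S n) <= C * INR n / Rpower (ln (INR n)) (1 + eps).
Proof.
  intros eps Heps. assert (Ha : 1 <= 1 + eps) by lra.
  exists (gp_set (1 + eps)). split; [now apply gp_set_general_position|].
  destruct (count_lower_bound (1 + eps) Ha) as [N HN].
  exists (kappa * Rpower (ln 2) (1 + eps) / 8), (6 * kappa).
  assert (0 < Rpower (ln 2) (1 + eps)) by apply exp_pos.
  split; [unfold kappa; lra|]. split; [unfold kappa; lra|].
  exists (Nat.max N (2 ^ S (j0 (1 + eps))))%nat. split.
  - pose proof (Nat.pow_nonzero 2 (j0 (1 + eps))). simpl. lia.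
  - intros n Hn. split; [apply HN|apply count_upper_bound; auto]; lia.
Qed.
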